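(* Let $G$ be a simple undirected graph on vertex set $[n]$ and let $I_H\subseteq[n]$ be a vertex set whose induced subgraph $H=G[I_H]$ is triangle-free. Then for every $X\in\operatorname{R}_1[\mathcal{M}_n^+(G)]$, the comparison matrix of the principal submatrix satisfies $M(X[I_H])\ge 0$.
   Context: $\mathcal{M}_n^+(G)$ is the cone of $n\times n$ complex PSD matrices $X$ with $X_{ij}=0$ whenever $i\neq j$ and $\{i,j\}$ is not an edge of $G$. For a cone $\mathcal{C}\subseteq\mathcal{M}_n^+$, $\operatorname{R}_1[\mathcal{C}]$ is the convex cone generated by the rank-1 matrices in $\mathcal{C}$. $X[I]$ denotes the principal submatrix with rows and columns in $I$. The comparison matrix $M(Y)$ of a square matrix $Y$ is defined by $M(Y)_{ii}=|Y_{ii}|$ and $M(Y)_{ij}=-|Y_{ij}|$ for $i\ne j$. A graph is triangle-free if it contains no 3-cycle. *)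

(* Complex numbers are R[i] for a real closed field R
   (in particular R : realType gives the usual complex numbers). *)
From HB Require Import structures.
From mathcomp Require Import all_boot all_order all_algebra.
From mathcomp Require Import complex.
Set Implicit Arguments. Unset Strict Implicit. Unset Printing Implicit Defensive.
Import Order.TTheory GRing.Theory Num.Theory.
Local Open Scope ring_scope.

Section Defs.
Variable C : numClosedFieldType.

Definition adjmx {m n : nat} (A : 'M[C]_(m, n)) : 'M[C]_(n, m) :=
  (map_mx Num.conj A)^T.

Definition psd {n : nat} (X : 'M[C]_n) : Prop :=
  adjmx X = X /\ forall v : 'cV[C]_n, 0 <= (adjmx v *m X *m v) 0 0.

Definition simple_graph {n : nat} (adj : rel 'I_n) : Prop :=
  symmetric adj /\ irreflexive adj.

Definition Mplus {n : nat} (adj : rel 'I_n) (X : 'M[C]_n) : Prop :=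
  psd X /\ forall i j : 'I_n, i != j -> ~~ adj i j -> X i j = 0.

Definition R1Mplus {n : nat} (adj : rel 'I_n) (X : 'M[C]_n) : Prop :=
  exists (m : nat) (c : 'I_m -> C) (Y : 'I_m -> 'M[C]_n),
    [/\ forall k, 0 <= c k,
        forall k, Mplus adj (Y k) /\ \rank (Y k) = 1%N
      & X = \sum_(k < m) c k *: Y k].

(* principal submatrix X[I] (rows/columns of I in increasing order) *)
Definition principal_submx {n : nat} (X : 'M[C]_n) (I : {set 'I_n}) :
  'M[C]_#|I| :=
  \matrix_(i < #|I|, j < #|I|) X (enum_val i) (enum_val j).

Definition comparison_mx {n : nat} (Y : 'M[C]_n) : 'M[C]_n :=
  \matrix_(i, j) (if i == j then `|Y i j| else - `|Y i j|).

End Defs.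

Definition triangle_free_on {n : nat} (adj : rel 'I_n) (I : {set 'I_n}) : Prop :=
  forall i j k : 'I_n, i \in I -> j \in I -> k \in I ->
    ~ [&& adj i j, adj j k & adj i k].

From HB Require Import structures.
From mathcomp Require Import all_boot all_order all_algebra.
From mathcomp Require Import complex reals.
From mathcomp Require Import ring.
Import Order.TTheory GRing.Theory Num.Theory.
Set Implicit Arguments. Unset Strict Implicit. Unset Printing Implicit Defensive.
Local Open Scope ring_scope.

(* Write X = sum_k c_k Y_k with c_k >= 0 and Y_k = x_k x_k^* a rank-one matrix
   of M_n^+(G), and let M = M(X[I]).  Since M is real symmetric with nonpositive
   off-diagonal entries, v^* M v >= u^T M u for u = |v|.  For u >= 0 the triangle
   inequality gives u^T M u >= sum_k c_k u^T M(Y_k[I]) u.  The entries of Y_k[I]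
   have moduli q_i q_j with q_i = |x_{k,i}|, and the support of q is a clique of
   the triangle-free graph G[I], so no three q_i are nonzero.  Hence, with
   p_i = q_i u_i, u^T M(Y_k[I]) u = 2 sum p_i^2 - (sum p_i)^2 >= 0. *)

Lemma sqr_sum_pairwise0 (R : comPzSemiRingType) m (q : 'I_m -> R) :
  (forall i j, i != j -> q i * q j = 0) ->
  (\sum_i q i) ^+ 2 = \sum_i q i ^+ 2.
Proof.
move=> q_pair0; rewrite expr2 mulr_suml; apply: eq_bigr => i _.
rewrite mulr_sumr (bigD1 i) //= big1 ?addr0 // => j ji.
by rewrite q_pair0 // eq_sym.
Qed.

Lemma sqr_sum_le_twice_sum_sqr (R : numDomainType) m (q : 'I_m -> R) :
  (forall i, 0 <= q i) ->
  (forall i j l, i != j -> j != l -> i != l -> q i * q j * q l = 0) ->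
  (\sum_i q i) ^+ 2 <= 2 * \sum_i q i ^+ 2.
Proof.
elim: m q => [|m IHm] q q_ge0 q_triple0; first by rewrite !big_ord0 expr0n mulr0.
rewrite !big_ord_recl.
have q_lift_triple0 i j l : i != j -> j != l -> i != l ->
    q (lift ord0 i) * q (lift ord0 j) * q (lift ord0 l) = 0.
  by move=> ij jl il; apply: q_triple0; rewrite (inj_eq lift_inj).
have [q0|q0_neq0] := eqVneq (q ord0) 0.
  by rewrite q0 add0r expr0n add0r; apply: IHm.
set S := \sum_(i < m) _.
have -> : \sum_(i < m) q (lift ord0 i) ^+ 2 = S ^+ 2.
  apply/esym/sqr_sum_pairwise0 => i j ij; apply/eqP.
  have lift_ij : lift ord0 i != lift ord0 j by rewrite (inj_eq lift_inj).
  have /eqP := q_triple0 _ _ _ (neq_lift ord0 i) lift_ij (neq_lift ord0 j).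
  by rewrite -mulrA mulf_eq0 (negPf q0_neq0).
have S_ge0 : 0 <= S by apply: sumr_ge0.
rewrite -subr_ge0.
have -> : 2 * (q ord0 ^+ 2 + S ^+ 2) - (q ord0 + S) ^+ 2 = (q ord0 - S) ^+ 2 by ring.
by apply: real_exprn_even_ge0 => //; rewrite realB ?ger0_real.
Qed.

Lemma rank1_minor (F : fieldType) n (Y : 'M[F]_n) i j :
  \rank Y = 1%N -> Y i j * Y j i = Y i i * Y j j.
Proof.
move=> rkY; move: (col_base Y) (row_base Y) (mulmx_base Y).
rewrite rkY => cb rb <-; rewrite !mxE !big_ord1; ring.
Qed.

Section Comparison.
Variable C : numClosedFieldType.

Definition hform m (M : 'M[C]_m) (v : 'cV[C]_m) : C := (adjmx v *m M *m v) 0 0.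

Lemma hformE m (M : 'M[C]_m) (v : 'cV[C]_m) :
  hform M v = \sum_i \sum_j (v i 0)^* * M i j * v j 0.
Proof.
rewrite /hform mxE exchange_big; apply: eq_bigr => j _.
by rewrite mxE mulr_suml; apply: eq_bigr => i _; rewrite !mxE.
Qed.

Lemma hform_sum m K (c : 'I_K -> C) (M : 'I_K -> 'M[C]_m) (v : 'cV[C]_m) :
  hform (\sum_k c k *: M k) v = \sum_k c k * hform (M k) v.
Proof.
rewrite /hform mulmx_sumr mulmx_suml summxE; apply: eq_bigr => k _.
by rewrite -scalemxAr -scalemxAl mxE.
Qed.

Lemma ler_hform m (M N : 'M[C]_m) (v : 'cV[C]_m) :
  (forall i, 0 <= v i 0) -> (forall i j, M i j <= N i j) ->
  hform M v <= hform N v.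
Proof.
move=> v_ge0 leMN; rewrite !hformE; apply: ler_sum => i _; apply: ler_sum => j _.
by rewrite geC0_conj // ler_wpM2r // ler_wpM2l.
Qed.

Lemma twice_Re_le_norm (w : C) : w + w^* <= 2 * `|w|.
Proof.
by have := (leif_Re_Creal w).1; rewrite ReE ler_pdivrMr // mulrC.
Qed.

(* Pairing the (i, j) and (j, i) terms reduces this to Re w <= |w|. *)
Lemma hform_normv_le m (M : 'M[C]_m) (v : 'cV[C]_m) :
  (forall i j, M j i = M i j) -> (forall i j, i != j -> M i j <= 0) ->
  hform M (map_mx Num.norm v) <= hform M v.
Proof.
move=> M_sym M_offdiag_le0; rewrite -subr_ge0 !hformE -sumrB.
set d := fun i j => M i j * ((v i 0)^* * v j 0 - `|v i 0| * `|v j 0|).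
have -> : \sum_i (\sum_j (v i 0)^* * M i j * v j 0 -
                 \sum_j (map_mx Num.norm v i 0)^* * M i j * map_mx Num.norm v j 0)
          = \sum_i \sum_j d i j.
  apply: eq_bigr => i _; rewrite -sumrB; apply: eq_bigr => j _.
  by rewrite /d !mxE (geC0_conj (normr_ge0 _)); ring.
rewrite -(pmulr_rge0 _ (ltr0Sn C 1)) mulr2n mulrDl mul1r.
rewrite [X in _ + X]exchange_big -big_split /=.
apply: sumr_ge0 => i _; rewrite -big_split /=; apply: sumr_ge0 => j _.
rewrite /d [M j i]M_sym -mulrDr.
have [<-|ij] := eqVneq i j; first by rewrite -normCKC expr2 !subrr addr0 mulr0.
apply: mulr_le0; first exact: M_offdiag_le0.
have := twice_Re_le_norm ((v i 0)^* * v j 0).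
rewrite rmorphM /= conjCK normrM norm_conjC (mulrC (v j 0)^*).
by rewrite addrACA -opprD subr_le0 (mulrC `|v j 0|) mulr2n mulrDl mul1r.
Qed.

(* The entry moduli of a rank-one psd matrix x x^*, namely |x_i| |x_j|. *)
Definition norm_geomean m (Z : 'M[C]_m) : Prop :=
  forall i j, `|Z i j| = sqrtC (Z i i) * sqrtC (Z j j).

Lemma norm_geomean_diag_ge0 m (Z : 'M[C]_m) i : norm_geomean Z -> 0 <= Z i i.
Proof. by move=> Znorm; rewrite -[Z i i]sqrtCK expr2 -Znorm. Qed.

Lemma hform_comparison_ge0 m (Z : 'M[C]_m) (u : 'cV[C]_m) :
  norm_geomean Z ->
  (forall i j l, i != j -> j != l -> i != l -> Z i j * Z j l * Z i l = 0) ->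
  (forall i, 0 <= u i 0) ->
  0 <= hform (comparison_mx Z) u.
Proof.
move=> Znorm Ztriangle0 u_ge0.
pose q i := sqrtC (Z i i) * u i 0.
have q_ge0 i : 0 <= q i by rewrite mulr_ge0 ?sqrtC_ge0 ?norm_geomean_diag_ge0.
have entryE i j : (u i 0)^* * comparison_mx Z i j * u j 0 =
                  (if i == j then 2 * (q i * q j) else 0) - q i * q j.
  by rewrite mxE geC0_conj // Znorm /q; case: eqP => _; ring.
rewrite hformE; under eq_bigr do under eq_bigr do rewrite entryE.
have -> : \sum_i \sum_j ((if i == j then 2 * (q i * q j) else 0) - q i * q j)
          = 2 * \sum_i q i ^+ 2 - (\sum_i q i) ^+ 2.
  rewrite expr2 mulr_suml mulr_sumr -sumrB; apply: eq_bigr => i _.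
  rewrite sumrB mulr_sumr (bigD1 i) //= eqxx big1 ?addr0 ?expr2 // => j ji.
  by rewrite eq_sym (negPf ji).
rewrite subr_ge0; apply: sqr_sum_le_twice_sum_sqr => // i j l ij jl il.
pose s := sqrtC (Z i i) * sqrtC (Z j j) * sqrtC (Z l l).
have /eqP : `|Z i j * Z j l * Z i l| = 0 by rewrite Ztriangle0 ?normr0.
have -> : `|Z i j * Z j l * Z i l| = s ^+ 2 by rewrite !normrM !Znorm /s; ring.
rewrite expf_eq0 /= => /eqP s0.
have -> : q i * q j * q l = s * (u i 0 * u j 0 * u l 0) by rewrite /q /s; ring.
by rewrite s0 mul0r.
Qed.

Lemma hermitian_entry m (Y : 'M[C]_m) i j : adjmx Y = Y -> Y j i = (Y i j)^*.
Proof. by move=> Yherm; rewrite -{1}Yherm !mxE. Qed.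

Lemma adjmx_conic m K (c : 'I_K -> C) (Z : 'I_K -> 'M[C]_m) :
  (forall k, 0 <= c k) -> (forall k, adjmx (Z k) = Z k) ->
  adjmx (\sum_k c k *: Z k) = \sum_k c k *: Z k.
Proof.
move=> c_ge0 Zherm; apply/matrixP => i j; rewrite !mxE !summxE rmorph_sum /=.
apply: eq_bigr => k _.
by rewrite !mxE rmorphM /= geC0_conj // hermitian_entry ?conjCK.
Qed.

Lemma comparison_mx_adj m (Z : 'M[C]_m) :
  (forall i j, `|Z j i| = `|Z i j|) -> adjmx (comparison_mx Z) = comparison_mx Z.
Proof.
move=> Znorm_sym; apply/matrixP => i j; rewrite !mxE eq_sym Znorm_sym.
by case: eqP => _; rewrite ?rmorphN /= geC0_conj.
Qed.

Lemma comparison_mx_conic_ge m K (c : 'I_K -> C) (Z : 'I_K -> 'M[C]_m) :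
  (forall k, 0 <= c k) -> (forall k i, 0 <= Z k i i) -> forall i j,
  (\sum_k c k *: comparison_mx (Z k)) i j <= comparison_mx (\sum_k c k *: Z k) i j.
Proof.
move=> c_ge0 Z_diag_ge0 i j; rewrite summxE !mxE summxE.
have sumE : \sum_k (c k *: Z k) i j = \sum_k c k * Z k i j.
  by apply: eq_bigr => k _; rewrite mxE.
rewrite sumE; under eq_bigr do rewrite !mxE.
case: eqP => [<-|_].
  rewrite ger0_norm; last by apply: sumr_ge0 => k _; rewrite mulr_ge0.
  by apply: ler_sum => k _; rewrite ger0_norm.
under eq_bigr do rewrite mulrN; rewrite sumrN lerN2.
apply: le_trans (ler_norm_sum _ _ _) _.
by apply: ler_sum => k _; rewrite normrM ger0_norm.
Qed.

Lemma comparison_mx_conic_psd m K (c : 'I_K -> C) (Z : 'I_K -> 'M[C]_m) :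
  (forall k, 0 <= c k) ->
  (forall k, adjmx (Z k) = Z k) ->
  (forall k, norm_geomean (Z k)) ->
  (forall k i j l, i != j -> j != l -> i != l -> Z k i j * Z k j l * Z k i l = 0) ->
  psd (comparison_mx (\sum_k c k *: Z k)).
Proof.
move=> c_ge0 Zherm Znorm Ztriangle0.
set X := \sum_k c k *: Z k.
have X_norm_sym i j : `|X j i| = `|X i j|.
  by rewrite (hermitian_entry _ _ (adjmx_conic c_ge0 Zherm)) norm_conjC.
split=> [|v]; first exact: comparison_mx_adj.
pose u := map_mx Num.norm v.
have u_ge0 i : 0 <= u i 0 by rewrite mxE.
have cmpX_le : hform (comparison_mx X) u <= hform (comparison_mx X) v.
  apply: hform_normv_le => [i j|i j ij]; first by rewrite !mxE eq_sym X_norm_sym.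
  by rewrite mxE (negPf ij) oppr_le0.
apply: le_trans cmpX_le.
have Z_diag_ge0 k i : 0 <= Z k i i by apply: norm_geomean_diag_ge0.
apply: le_trans (ler_hform u_ge0 (comparison_mx_conic_ge c_ge0 Z_diag_ge0)).
rewrite hform_sum; apply: sumr_ge0 => k _.
by rewrite mulr_ge0 // (hform_comparison_ge0 (Znorm k) (Ztriangle0 k) u_ge0).
Qed.

Lemma hform_delta m (Y : 'M[C]_m) i : hform Y (delta_mx i 0) = Y i i.
Proof.
rewrite /hform (_ : adjmx _ = delta_mx 0 i); first by rewrite -rowE -colE !mxE.
by apply/matrixP => a b; rewrite !mxE rmorph_nat andbC.
Qed.

Lemma psd_diag_ge0 m (Y : 'M[C]_m) i : psd Y -> 0 <= Y i i.
Proof. by move=> [_ Y_hform_ge0]; rewrite -hform_delta; apply: Y_hform_ge0. Qed.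

Lemma psd_rank1_norm_geomean m (Y : 'M[C]_m) :
  psd Y -> \rank Y = 1%N -> norm_geomean Y.
Proof.
move=> Ypsd rkY i j.
apply/eqP; rewrite -(@eqrXn2 _ 2) ?mulr_ge0 ?sqrtC_ge0 ?psd_diag_ge0 //.
by rewrite normCK -(hermitian_entry _ _ Ypsd.1) rank1_minor // exprMn !sqrtCK.
Qed.

Lemma principal_submx_conic n K (c : 'I_K -> C) (Y : 'I_K -> 'M[C]_n)
    (I : {set 'I_n}) :
  principal_submx (\sum_k c k *: Y k) I = \sum_k c k *: principal_submx (Y k) I.
Proof.
by apply/matrixP => i j; rewrite !mxE !summxE; apply: eq_bigr => k _; rewrite !mxE.
Qed.

Lemma adjmx_principal_submx n (Y : 'M[C]_n) (I : {set 'I_n}) :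
  adjmx (principal_submx Y I) = principal_submx (adjmx Y) I.
Proof. by apply/matrixP => i j; rewrite !mxE. Qed.

Lemma norm_geomean_principal_submx n (Y : 'M[C]_n) (I : {set 'I_n}) :
  norm_geomean Y -> norm_geomean (principal_submx Y I).
Proof. by move=> Ynorm i j; rewrite !mxE. Qed.

Lemma principal_submx_triangle0 n (adj : rel 'I_n) (I : {set 'I_n})
    (Y : 'M[C]_n) (i j l : 'I_#|I|) :
  Mplus adj Y -> triangle_free_on adj I -> i != j -> j != l -> i != l ->
  principal_submx Y I i j * principal_submx Y I j l * principal_submx Y I i l = 0.
Proof.
move=> [_ Y_pattern] tfI ij jl il; rewrite !mxE.
have adj_of_neq0 a b : a != b -> Y a b != 0 -> adj a b.
  by move=> ab; apply: contraR => /(Y_pattern _ _ ab) ->; rewrite eqxx.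
have enum_val_neq a b : a != b -> enum_val a != enum_val b :> 'I_n.
  by rewrite (inj_eq enum_val_inj).
apply/eqP/contraT; rewrite !mulf_eq0 !negb_or => /andP [/andP [nz_ij nz_jl] nz_il].
case: (tfI _ _ _ (enum_valP i) (enum_valP j) (enum_valP l)).
by rewrite !adj_of_neq0 ?enum_val_neq.
Qed.

End Comparison.

Theorem mainTheorem6 (R : realType) (n : nat) (adj : rel 'I_n)
  (IH : {set 'I_n}) (X : 'M[R[i]]_n) :
  simple_graph adj ->
  triangle_free_on adj IH ->
  R1Mplus adj X ->
  psd (comparison_mx (principal_submx X IH)).
Proof.
move=> _ tfIH [K [c [Y [c_ge0 Y_rank1 ->]]]].
rewrite principal_submx_conic; apply: comparison_mx_conic_psd => // k;
  have [Yk_Mplus Yk_rank1] := Y_rank1 k.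
- by rewrite adjmx_principal_submx Yk_Mplus.1.1.
- exact/norm_geomean_principal_submx/psd_rank1_norm_geomean/Yk_rank1/Yk_Mplus.1.
- by move=> i j l; apply: principal_submx_triangle0 Yk_Mplus tfIH.
Qed.
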